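(* Let $G=(V,E)$ be a graph and $k$ a nonnegative integer. Then $G$ has a dominating set of size $k$ if and only if it is possible to turn $G$ into a constellation (with vertex set $V$) by deleting $|E|-|V|+k$ edges.
   Context: All graphs are finite, simple and undirected. A dominating set of $G$ is a set $D\subseteq V$ such that every vertex of $V\setminus D$ is adjacent to some vertex of $D$. A star is a complete bipartite graph $K_{1,n}$ for some $n\ge 0$ (so a single vertex is a star). A constellation is a forest in which every connected component is a star. *)

From mathcomp Require Import all_boot all_order all_algebra.
Set Implicit Arguments. Unset Strict Implicit. Unset Printing Implicit Defensive.

(* A finite simple graph on vertex type T is given by its edge set
   E : {set {set T}}, each edge being a 2-element set of vertices. *)
Definition simple_edges (T : finType) (E : {set {set T}}) : Prop :=
  forall e, e \in E -> #|e| = 2.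

Definition adj (T : finType) (E : {set {set T}}) : rel T :=
  fun x y => (x != y) && ([set x; y] \in E).

Definition dominating (T : finType) (E : {set {set T}}) (D : {set T}) : Prop :=
  forall v, v \notin D -> exists2 u, u \in D & adj E u v.

Definition has_cycle (T : finType) (E : {set {set T}}) : Prop :=
  exists p : seq T, [/\ 3 <= size p, uniq p & cycle (adj E) p].

Definition forest (T : finType) (E : {set {set T}}) : Prop := ~ has_cycle E.

Definition component (T : finType) (E : {set {set T}}) (x : T) : {set T} :=
  [set y | connect (adj E) x y].

Definition induced_star (T : finType) (E : {set {set T}}) (C : {set T}) : Prop :=
  exists2 c, c \in C &
    forall u v, u \in C -> v \in C ->
      adj E u v = ((u == c) && (v != c)) || ((v == c) && (u != c)).

Definition constellation (T : finType) (E : {set {set T}}) : Prop :=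
  forest E /\ forall x : T, induced_star E (component E x).

From mathcomp Require Import all_boot all_order all_algebra.
From mathcomp Require Import zify.
Set Implicit Arguments. Unset Strict Implicit. Unset Printing Implicit Defensive.

(* A dominating set D yields a constellation with |V| - |D| edges: join every
   vertex outside D to one of its neighbours in D; the components are then
   stars centred at the vertices of D.  Conversely, the centres of the stars
   of a constellation F form a dominating set D, and every edge of F joins a
   non-centre to its centre, so |F| = |V| - |D|. *)

Section Graphs.
Variable T : finType.
Implicit Types (E F : {set {set T}}) (A D : {set T}).

Lemma adjC E u v : adj E u v = adj E v u.
Proof. by rewrite /adj eq_sym setUC. Qed.

Lemma adj_subset E F u v : F \subset E -> adj F u v -> adj E u v.
Proof. by rewrite /adj => sFE /andP[-> /(subsetP sFE) ->]. Qed.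

Lemma connect_adj_sym E : connect_sym (adj E).
Proof. by apply: sym_connect_sym => u v; apply: adjC. Qed.

Lemma mem_component E x : x \in component E x.
Proof. by rewrite inE connect0. Qed.

Lemma component_eq E x y : y \in component E x -> component E y = component E x.
Proof.
rewrite inE => cxy; apply/setP => z; rewrite !inE.
by rewrite (same_connect (connect_adj_sym E) cxy).
Qed.

Lemma simple_edges_subset E F : F \subset E -> simple_edges E -> simple_edges F.
Proof. by move=> sFE simE e /(subsetP sFE); apply: simE. Qed.

Lemma dominating_subset E F D : F \subset E -> dominating F D -> dominating E D.
Proof.
move=> sFE domD v vD; have [u uD a] := domD v vD.
by exists u; last exact: adj_subset a.
Qed.

Lemma card_pendant_edges A (g : T -> T) :
  {in A, forall v, g v \notin A} -> #|[set [set g v; v] | v in A]| = #|A|.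
Proof.
move=> gA; rewrite card_in_imset // => v w vA wA evw.
have : v \in [set g w; w] by rewrite -evw set22.
rewrite !inE => /orP[/eqP vg | /eqP //].
by move: (gA w wA); rewrite -vg vA.
Qed.

(* A cycle passes through each of its vertices using two distinct neighbours. *)
Lemma forest_pendant E :
  (forall u v, adj E u v -> exists2 w, w \in [:: u; v] &
     forall x y, adj E w x -> adj E w y -> x = y) ->
  forest E.
Proof.
move=> pendant [p [sp up cp]].
have [w wp wpendant] : exists2 w, w \in p &
    forall x y, adj E w x -> adj E w y -> x = y.
  case: p sp up cp => [|x [|y s]] //= _ _ /andP[a _].
  have [w wxy wP] := pendant x y a; exists w => //.
  by move: wxy; rewrite !inE => /orP[] /eqP ->; rewrite eqxx ?orbT.
have [i s eqr] := rot_to wp.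
have : cycle (adj E) (w :: s) by rewrite -eqr rot_cycle.
have : uniq (w :: s) by rewrite -eqr rot_uniq.
have : 3 <= size (w :: s) by rewrite -eqr size_rot.
case: s {eqr} => [|a [|b s]] // _ /andP[_] /andP[a_notin _].
rewrite /cycle rcons_path => /andP[/andP[wa _] lastw].
rewrite adjC in lastw; move: a_notin.
by rewrite (wpendant _ _ wa lastw) /= mem_last.
Qed.

End Graphs.

Section DominationEdges.
Variables (T : finType) (E : {set {set T}}) (D : {set T}).
Hypothesis domD : dominating E D.

Definition dominator (v : T) : T := odflt v [pick u in D | adj E u v].

Definition domination_edges : {set {set T}} :=
  [set [set dominator v; v] | v in ~: D].

Lemma dominatorP v : v \notin D -> dominator v \in D /\ adj E (dominator v) v.
Proof.
move=> vD; rewrite /dominator; case: pickP => [u /andP[uD a] | none] //=.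
by have [u uD a] := domD vD; move: (none u); rewrite uD a.
Qed.

Lemma adj_domination_edges u v :
  adj domination_edges u v =
  (u \notin D) && (v == dominator u) || (v \notin D) && (u == dominator v).
Proof.
apply/idP/idP => [/andP[neq /imsetP[w]] | ].
  rewrite inE => wD euv.
  have : u \in [set dominator w; w] by rewrite -euv set21.
  have : v \in [set dominator w; w] by rewrite -euv set22.
  rewrite !inE => /orP[] /eqP ev /orP[] /eqP eu; subst u v;
    by rewrite ?eqxx ?wD ?orbT in neq *.
have edge w : w \notin D -> adj domination_edges (dominator w) w.
  move=> wD; have [_ /andP[neq _]] := dominatorP wD.
  by rewrite /adj neq; apply/imsetP; exists w; rewrite ?inE.
by case/orP => /andP[wD /eqP ->]; [rewrite adjC |]; apply: edge.
Qed.

Lemma domination_edges_subset : domination_edges \subset E.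
Proof.
apply/subsetP => e /imsetP[v]; rewrite inE => vD ->.
by have [_ /andP[]] := dominatorP vD.
Qed.

Lemma card_domination_edges : #|domination_edges| = #|~: D|.
Proof.
apply: card_pendant_edges => v; rewrite !inE negbK.
by case/dominatorP.
Qed.

Lemma adj_domination_edges_out u v :
  u \notin D -> adj domination_edges u v -> v = dominator u.
Proof.
move=> uD; rewrite adj_domination_edges uD /= => /orP[/eqP // | /andP[vD /eqP eu]].
by have [] := dominatorP vD; rewrite -eu (negbTE uD).
Qed.

Lemma domination_edges_forest : forest domination_edges.
Proof.
apply: forest_pendant => u v a.
have [w wuv wD] : exists2 w, w \in [:: u; v] & w \notin D.
  move: a; rewrite adj_domination_edges => /orP[] /andP[wD _].
    by exists u; rewrite ?inE ?eqxx.
  by exists v; rewrite ?inE ?eqxx ?orbT.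
by exists w => // x y /(adj_domination_edges_out wD) -> /(adj_domination_edges_out wD).
Qed.

Definition dominating_root (v : T) : T := if v \in D then v else dominator v.

Lemma dominating_root_in v : dominating_root v \in D.
Proof. by rewrite /dominating_root; case: ifPn => // /dominatorP[]. Qed.

Lemma dominating_root_connect x y :
  connect (adj domination_edges) x y -> dominating_root x = dominating_root y.
Proof.
move/connectP => [p pth ->] {y}; elim: p x pth => //= z p IH x /andP[a pth].
rewrite -(IH _ pth) /dominating_root; move: a; rewrite adj_domination_edges.
case/orP => /andP[wD /eqP ->]; rewrite (negbTE wD);
  by have [-> _] := dominatorP wD.
Qed.

Lemma connect_dominating_root x :
  connect (adj domination_edges) x (dominating_root x).
Proof.
rewrite /dominating_root; case: ifPn => xD; first exact: connect0.
by apply: connect1; rewrite adj_domination_edges xD eqxx.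
Qed.

Lemma dominating_rootP w :
  w \in D /\ dominating_root w = w \/ w \notin D /\ dominator w = dominating_root w.
Proof. by rewrite /dominating_root; case: ifPn; [left | right]. Qed.

Lemma domination_edges_star x :
  induced_star domination_edges (component domination_edges x).
Proof.
set c := dominating_root x; have cD : c \in D := dominating_root_in x.
have centreC w : w \in component domination_edges x ->
    (w == c) = (w \in D) /\ (w \notin D -> dominator w = c).
  rewrite inE => /dominating_root_connect; rewrite -/c => ->.
  by have [[-> ->] | [wD ->]] := dominating_rootP w; rewrite ?eqxx // (negbTE wD);
    split=> //; apply: contraNF wD => /eqP ->; apply: dominating_root_in.
exists c; first by rewrite inE connect_dominating_root.
move=> u v /centreC[eu du] /centreC[ev dv].
rewrite adj_domination_edges eu ev.
case uD: (u \in D); case vD: (v \in D) => //=.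
- by rewrite dv ?vD // eu.
- by rewrite du ?uD // ev orbF.
- by rewrite du ?dv ?uD ?vD // eu ev uD vD.
Qed.

Lemma constellation_domination_edges : constellation domination_edges.
Proof. by split; [apply: domination_edges_forest | apply: domination_edges_star]. Qed.

End DominationEdges.

Section ConstellationCentres.
Variables (T : finType) (F : {set {set T}}).
Hypothesis starF : forall x, induced_star F (component F x).

Definition star_centreb (C : {set T}) (c : T) : bool :=
  [forall u in C, forall v in C,
     adj F u v == ((u == c) && (v != c)) || ((v == c) && (u != c))].

Definition centre (x : T) : T :=
  odflt x [pick c in component F x | star_centreb (component F x) c].

Lemma centreP x :
  centre x \in component F x /\ star_centreb (component F x) (centre x).
Proof.
rewrite /centre; case: pickP => [c /andP[] | none] //=.
have [c cC starc] := starF x; move: (none c); rewrite cC /= => /negP[].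
by apply/forall_inP => u uC; apply/forall_inP => v vC; rewrite starc.
Qed.

Lemma centre_eq x y : y \in component F x -> centre y = centre x.
Proof.
move=> /component_eq eqC; have := centreP y; rewrite /centre eqC.
by case: pickP => //= none [yC sy]; move: (none y); rewrite yC sy.
Qed.

Lemma adj_component x u v : u \in component F x -> v \in component F x ->
  adj F u v =
  (u == centre x) && (v != centre x) || (v == centre x) && (u != centre x).
Proof.
move=> uC vC; have [_ /forall_inP/(_ u uC)/forall_inP/(_ v vC)/eqP //] := centreP x.
Qed.

Definition centres : {set T} := [set v | centre v == v].

Lemma centre_centres v : centre v \in centres.
Proof. by rewrite inE (centre_eq (centreP v).1). Qed.

Lemma adj_centre v : v \notin centres -> adj F (centre v) v.
Proof.
rewrite inE => ncv; rewrite (adj_component (centreP v).1 (mem_component F v)).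
by rewrite eqxx /= eq_sym ncv.
Qed.

Lemma centres_dominating : dominating F centres.
Proof. by move=> v ncv; exists (centre v); [apply: centre_centres | apply: adj_centre]. Qed.

Hypothesis simF : simple_edges F.

Lemma constellation_edges : F = [set [set centre v; v] | v in ~: centres].
Proof.
apply/setP => e; apply/idP/imsetP => [eF | [v]]; last first.
  by rewrite inE => ncv ->; case/andP: (adj_centre ncv).
have /cards2P [u [v [neq ee]]] : #|e| == 2 by rewrite simF.
have a : adj F u v by rewrite /adj neq -ee.
have vC : v \in component F u by rewrite inE connect1.
have cv : centre v = centre u := centre_eq vC.
move: a; rewrite (adj_component (mem_component F u) vC).
case/orP => /andP[/eqP cu ncu].
  by exists v; rewrite ?inE cv -cu // eq_sym.
by exists u; rewrite ?inE 1?eq_sym // ee cu setUC.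
Qed.

Lemma card_constellation : #|F| = #|~: centres|.
Proof.
rewrite {1}constellation_edges card_pendant_edges // => v _.
by rewrite inE negbK centre_centres.
Qed.

End ConstellationCentres.

Local Open Scope ring_scope.

Theorem mainTheorem5 (T : finType) (E : {set {set T}}) (k : nat) :
  simple_edges E ->
  (exists D : {set T}, dominating E D /\ #|D|%N = k) <->
  (exists F : {set {set T}},
      [/\ F \subset E,
          (#|E|%:Z - #|F|%:Z = #|E|%:Z - #|T|%:Z + k%:Z)%R
        & constellation F]).
Proof.
move=> simE; split => [[D [domD <-]] | [F [sFE cardF [_ starF]]]].
- exists (domination_edges E D); split.
  + exact: domination_edges_subset.
  + by have := cardsC D; rewrite -(card_domination_edges domD); lia.
  + exact: constellation_domination_edges.
- exists (centres F); split; first exact: dominating_subset sFE (centres_dominating starF).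
  have := cardsC (centres F).
  by rewrite -(card_constellation starF (simple_edges_subset sFE simE)); lia.
Qed.
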